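(* Let $H_k = F_k[2..f_k]$ for $k\ge 2$. Then (i) for every $k \geq 2$, both $H_k$ and $H_k\cdot a$ are Nyldon words; (ii) for every $k\geq 4$, the longest Nyldon proper suffix of $H_k$ is $H_{k-2}$, and the longest Nyldon proper suffix of $H_k\cdot a$ is $H_{k-2}\cdot a$.
   Context: Strings are over the binary alphabet $\{a,b\}$ ordered by $a \prec b$, and $\prec$ also denotes the induced lexicographic order on strings: $x \prec y$ iff $x$ is a proper prefix of $y$, or there is $i$ with $x[1..i-1]=y[1..i-1]$ and $x[i]\prec y[i]$; $x\preceq y$ means $x\prec y$ or $x=y$. For a string $w$, $w[i..j]$ denotes the substring from position $i$ to position $j$ (1-indexed). Nyldon words are defined recursively: every string of length $1$ is a Nyldon word; a string $w$ with $|w|\ge 2$ is a Nyldon word iff there is no factorization $w=\gamma_1\cdots\gamma_m$ with $m\ge 2$, each $\gamma_i$ a nonempty Nyldon word, and $\gamma_1\preceq\gamma_2\preceq\cdots\preceq\gamma_m$. A Nyldon proper suffix of $w$ is a proper suffix of $w$ that is a Nyldon word; the longest Nyldon proper suffix of $w$ is the longest such suffix. Fibonacci words: $F_0=b$, $F_1=a$, $F_k=F_{k-1}F_{k-2}$ for $k\ge 2$; $f_k=|F_k|$. *)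

From mathcomp Require Import all_boot.
Set Implicit Arguments. Unset Strict Implicit. Unset Printing Implicit Defensive.

(* Binary alphabet {a,b} encoded in bool: a = false, b = true, so a < b. *)
Definition letter := bool.
Definition a : letter := false.
Definition b : letter := true.
Definition word := seq letter.

Fixpoint lexlt (x y : word) : bool :=
  match x, y with
  | [::], [::] => false
  | [::], _ :: _ => true
  | _ :: _, [::] => false
  | c :: x', d :: y' => (c < d) || ((c == d) && lexlt x' y')
  end.

Definition lexle (x y : word) : bool := (x == y) || lexlt x y.

(* Any factor of a
   factorization of w into >= 2 nonempty words has length <= size w - 1,
   so the recursion on the bound n is faithful to the recursive definition. *)
Fixpoint nyl (n : nat) (w : word) : Prop :=
  match n with
  | 0 => False
  | S m =>
      size w = 1 \/
      (2 <= size w <= n /\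
       ~ (exists gs : seq word,
             2 <= size gs /\
             (forall g, g \in gs -> nyl m g) /\
             flatten gs = w /\
             sorted lexle gs))
  end.

Definition Nyldon (w : word) : Prop := nyl (size w) w.

Definition nyldon_proper_suffix (w s : word) : Prop :=
  (exists p : word, p <> [::] /\ w = p ++ s) /\ Nyldon s.

Definition longest_nyldon_proper_suffix (w s : word) : Prop :=
  nyldon_proper_suffix w s /\
  forall s', nyldon_proper_suffix w s' -> size s' <= size s.

Fixpoint F (k : nat) : word :=
  match k with
  | 0 => [:: b]
  | 1 => [:: a]
  | S ((S j) as k1) => F k1 ++ F j
  end.

Definition H (k : nat) : word := behead (F k).

From mathcomp Require Import all_boot all_order zify.
From Stdlib Require Import Classical.
Set Implicit Arguments. Unset Strict Implicit. Unset Printing Implicit Defensive.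
Import Order.TTheory.

(* Every word has a unique nondecreasing factorization into Nyldon words, computed
   right to left by [factorization], and every Nyldon proper suffix of a Nyldon word
   is smaller than the word; the two facts are proved together by induction on the
   length.  They yield a gluing rule: if p and v are Nyldon, v < p, and every Nyldon
   proper suffix of p is at most v, then p v is Nyldon and each of its Nyldon proper
   suffixes is a suffix of v.  Since H_k a = (H_{k-1} a) (H_{k-2} a) and
   H_k = (H_{k-1} a) H_{k-2}, the rule applies at every step of an induction on k. *)

Lemma lexltE (x y : word) : lexlt x y = (x < y :> seqlexi bool)%O.
Proof. by elim: x y => [|c x IH] [|d y] //=; rewrite ltxi_cons IH; case: c; case: d. Qed.

Lemma lexleE (x y : word) : lexle x y = (x <= y :> seqlexi bool)%O.
Proof. by rewrite /lexle lexltE le_eqVlt. Qed.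

Lemma lexle_refl x : lexle x x.
Proof. by rewrite lexleE. Qed.

Lemma lexltW x y : lexlt x y -> lexle x y.
Proof. by rewrite lexltE lexleE; apply: ltW. Qed.

Lemma lexle_trans x y z : lexle x y -> lexle y z -> lexle x z.
Proof. by rewrite !lexleE; apply: le_trans. Qed.

Lemma lexle_lt_trans x y z : lexle x y -> lexlt y z -> lexlt x z.
Proof. by rewrite lexleE !lexltE; apply: le_lt_trans. Qed.

Lemma lexlt_le_trans x y z : lexlt x y -> lexle y z -> lexlt x z.
Proof. by rewrite lexleE !lexltE; apply: lt_le_trans. Qed.

Lemma lexltNge x y : lexlt x y = ~~ lexle y x.
Proof. by rewrite lexleE lexltE ltNge. Qed.

Lemma lexlt_prefix x y : y != [::] -> lexlt x (x ++ y).
Proof.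
elim: x => [|c x IH] /=; first by case: y.
by move=> /IH ->; rewrite eqxx orbT.
Qed.

Lemma lexle_prefix x y : lexle x (x ++ y).
Proof. by case: y => [|c y]; rewrite ?cats0 ?lexle_refl // lexltW ?lexlt_prefix. Qed.

Lemma lexlt_catr x y z : lexlt x y -> lexlt x (y ++ z).
Proof.
elim: x y => [|c x IH] [|d y] //=.
by case/orP => [->//|/andP[-> /IH ->]]; rewrite orbT.
Qed.

Lemma cat_eq_overlap (T : Type) (x1 y1 x2 y2 : seq T) :
  x1 ++ y1 = x2 ++ y2 -> size y2 <= size y1 ->
  exists2 m, y1 = m ++ y2 & x2 = x1 ++ m.
Proof.
elim: x1 x2 => [|c x1 IH] [|d x2] //=.
- by move=> ->; exists [::].
- by move=> ->; exists (d :: x2).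
- by move=> <-; rewrite /= size_cat ltnNge leq_addl.
- by case=> -> /IH h /h [m -> ->]; exists m.
Qed.

Definition splits (P : word -> Prop) (w : word) : Prop :=
  exists gs : seq word, 2 <= size gs /\
    (forall g, g \in gs -> P g) /\ flatten gs = w /\ sorted lexle gs.

Lemma size_mem_flatten (gs : seq word) (g : word) :
  g \in gs -> size g <= size (flatten gs).
Proof. by case/splitPr=> gs1 gs2; rewrite flatten_cat /= !size_cat; lia. Qed.

Lemma size_factor_lt (gs : seq word) (g : word) :
  2 <= size gs -> (forall h : word, h \in gs -> 0 < size h) -> g \in gs ->
  size g < size (flatten gs).
Proof.
case: gs => [|x [|y r]] //= _ gs_pos; rewrite inE => /orP[/eqP->|g_yr].
  by have := gs_pos y; rewrite !inE eqxx orbT /= !size_cat => /(_ isT); lia.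
have := size_mem_flatten g_yr; have := gs_pos x (mem_head _ _).
by rewrite /= !size_cat; lia.
Qed.

Lemma splits_sub (P Q : word -> Prop) w :
  (forall g : word, P g -> 0 < size g) ->
  (forall g : word, P g -> size g < size w -> Q g) -> splits P w -> splits Q w.
Proof.
move=> P_pos PQ [gs [gs2 [gsP [gs_w sorted_gs]]]]; exists gs; split=> //; split=> // g g_gs.
apply: PQ (gsP _ g_gs) _; rewrite -gs_w.
by apply: (size_factor_lt gs2 _ g_gs) => h /gsP; apply: P_pos.
Qed.

Lemma nyl_pos n w : nyl n w -> 0 < size w.
Proof. by case: n => //= n [-> //| [/andP[/ltnW]]]. Qed.

Lemma nyl_succ n w : size w <= n -> nyl n w <-> nyl n.+1 w.
Proof.
elim: n w => [|n IH] w w_n.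
  by move: w_n; rewrite leqn0 => /nilP->; split=> //= -[|[]].
have IHg g : size g < size w -> nyl n g <-> nyl n.+1 g.
  by move=> g_w; apply: IH; exact: leq_trans g_w w_n.
have splitsE : splits (nyl n) w <-> splits (nyl n.+1) w.
  by split; apply: splits_sub => [g /nyl_pos //|g g_n /IHg[]]; auto.
have bounds : (2 <= size w <= n.+1) = (2 <= size w <= n.+2).
  by rewrite w_n (leq_trans w_n).
rewrite /= bounds; split=> -[-> | [w_b not_split]]; [by left | right | by left | right];
  by split=> //; apply: contra_not not_split => /splitsE.
Qed.

Lemma nyl_Nyldon n w : size w <= n -> nyl n w <-> Nyldon w.
Proof.
elim: n => [|n IH]; first by rewrite leqn0 /Nyldon => /eqP->.
rewrite leq_eqVlt ltnS => /orP[/eqP w_n | w_n]; first by rewrite /Nyldon w_n.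
by rewrite -nyl_succ //; apply: IH.
Qed.

Lemma Nyldon_pos w : Nyldon w -> 0 < size w.
Proof. exact: nyl_pos. Qed.

Lemma Nyldon_neq0 w : Nyldon w -> w <> [::].
Proof. by move=> /Nyldon_pos + w0; rewrite w0. Qed.

Lemma Nyldon1 (c : letter) : Nyldon [:: c].
Proof. by left. Qed.

Definition splittable (w : word) : Prop := splits Nyldon w.

Lemma NyldonE w : Nyldon w <-> size w = 1 \/ (2 <= size w /\ ~ splittable w).
Proof.
rewrite /Nyldon; case w_m: (size w) => [|m]; first by split=> [[]|[|[]]].
have splitsE : splits (nyl m) w <-> splittable w.
  split.
  - apply: splits_sub => [g /nyl_pos // | g g_P];
      by rewrite w_m ltnS => g_m; apply/(nyl_Nyldon g_m).
  - apply: splits_sub => [g /Nyldon_pos // | g g_P];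
      by rewrite w_m ltnS => g_m; apply/(nyl_Nyldon g_m).
rewrite /= w_m leqnn andbT; split=> -[-> | [w_b not_split]]; [by left | right | by left | right];
  by split=> //; apply: contra_not not_split => /splitsE.
Qed.

Definition nyldon_fact (gs : seq word) (w : word) : Prop :=
  (forall g, g \in gs -> Nyldon g) /\ flatten gs = w /\ sorted lexle gs.

Lemma Nyldon_unsplittable w : Nyldon w -> ~ splittable w.
Proof.
case/NyldonE=> [w1 [gs [gs2 [gsN [gs_w _]]]] | [_ //]].
have [g g_gs] : exists g, g \in gs by case: gs gs2 {gsN gs_w} => // g gs; exists g; rewrite mem_head.
have := size_factor_lt gs2 (fun h h_gs => Nyldon_pos (gsN h h_gs)) g_gs.
by rewrite gs_w w1 ltnS leqn0 size_eq0 => /eqP g0; have := gsN g g_gs; rewrite g0.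
Qed.

Lemma nyldon_fact1 w : Nyldon w -> nyldon_fact [:: w] w.
Proof. by move=> wN; split=> [g /[!inE]/eqP-> | ]; rewrite //= cats0. Qed.

Lemma nyldon_fact_exists w : exists gs, nyldon_fact gs w.
Proof.
case: w => [|c u]; first by exists [::].
have [cuN | not_cuN] := classic (Nyldon (c :: u)); first by exists [:: c :: u]; apply: nyldon_fact1.
apply: NNPP => no_fact; apply: (not_cuN); apply/NyldonE; right; split.
  by case: u {no_fact} not_cuN => // /(_ (Nyldon1 c)).
by case=> gs [_ gs_fact]; apply: no_fact; exists gs.
Qed.

Lemma nyldon_fact0 gs : nyldon_fact gs [::] -> gs = [::].
Proof. by case: gs => // g gs [/(_ g (mem_head _ _))/Nyldon_neq0 + [/=]]; case: g. Qed.

Lemma nyldon_fact_rcons gs g w :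
  nyldon_fact (rcons gs g) w -> Nyldon g /\ w = flatten gs ++ g.
Proof.
by case=> gsN [<- _]; rewrite flatten_rcons; split=> //; apply: gsN; rewrite mem_rcons mem_head.
Qed.

Lemma nyldon_fact_catr gs1 gs2 w :
  nyldon_fact (gs1 ++ gs2) w -> nyldon_fact gs1 (flatten gs1) /\ nyldon_fact gs2 (flatten gs2).
Proof.
case=> gsN [_ /cat_sorted2[sorted1 sorted2]].
by split; split=> // g g_gs; apply: gsN; rewrite mem_cat g_gs ?orbT.
Qed.

Lemma nyldon_fact_cat gs1 f gs2 u v :
  nyldon_fact gs1 u -> nyldon_fact (f :: gs2) v -> lexle (last f gs1) f ->
  nyldon_fact (gs1 ++ f :: gs2) (u ++ v).
Proof.
move=> [gs1N [<- sorted1]] [gs2N [<- sorted2]] le_f; do !split.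
- by move=> g; rewrite mem_cat => /orP[/gs1N | /gs2N].
- by rewrite flatten_cat.
case: gs1 {gs1N} sorted1 le_f => //= g gs1 sorted1 le_f.
by rewrite cat_path sorted1 /= le_f.
Qed.

Lemma splittable_cat t f gs v :
  t <> [::] -> nyldon_fact (f :: gs) v ->
  (forall p s, t = p ++ s -> Nyldon s -> lexle s f) -> splittable (t ++ v).
Proof.
move=> t0 fact_v t_le.
have [ts fact_t] := nyldon_fact_exists t.
case/lastP: ts fact_t => [[_ [/esym t_nil _]] // | ts e] fact_t.
exists (rcons ts e ++ f :: gs); split; first by rewrite size_cat size_rcons addSn addnS.
apply: nyldon_fact_cat => //; rewrite last_rcons.
by have [eN t_e] := nyldon_fact_rcons fact_t; apply: t_le t_e eN.
Qed.

Fixpoint insert_factor (x : word) (L : seq word) : seq word :=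
  if L is f :: L' then (if lexlt f x then insert_factor (x ++ f) L' else x :: L)
  else [:: x].

Fixpoint factorization (w : word) : seq word :=
  if w is c :: u then insert_factor [:: c] (factorization u) else [::].

Lemma flatten_insert_factor x L : flatten (insert_factor x L) = x ++ flatten L.
Proof.
elim: L x => [|f L IH] x /=; first by rewrite cats0.
by case: ifP => _; rewrite ?IH -?catA.
Qed.

Lemma flatten_factorization w : flatten (factorization w) = w.
Proof. by elim: w => //= c w IH; rewrite flatten_insert_factor IH. Qed.

Lemma insert_factor_cat x L1 L2 y :
  insert_factor x L1 = [:: y] -> insert_factor x (L1 ++ L2) = insert_factor y L2.
Proof. by elim: L1 x => [|f L1 IH] x /=; [case=> -> | case: ifP => // _; apply: IH]. Qed.

Lemma insert_factor_sorted x L : sorted lexle (x :: L) -> insert_factor x L = x :: L.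
Proof. by case: L => //= f L /andP[x_f _]; rewrite lexltNge x_f. Qed.

Lemma insert_factor_rcons x L v :
  (forall y, insert_factor x L = [:: y] -> lexle y v) ->
  insert_factor x (rcons L v) = rcons (insert_factor x L) v.
Proof.
elim: L x => [|f L IH] x /= L_v; first by rewrite lexltNge L_v.
by case: ifP L_v => // _; apply: IH.
Qed.

Lemma insert_factorP x L : exists M L',
  [/\ L = M ++ L', insert_factor x M = [:: x ++ flatten M],
      insert_factor x L = (x ++ flatten M) :: L' &
      forall f L'', L' = f :: L'' -> lexle (x ++ flatten M) f].
Proof.
elim: L x => [|f L IH] x; first by exists [::], [::]; rewrite /= cats0.
rewrite /=; case: ifP => [f_x | /negbT]; last first.
  by rewrite lexltNge negbK => x_f; exists [::], (f :: L); rewrite /= cats0; split=> // ? ? [<-].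
have [M [L' [-> M_x L_x L'_x]]] := IH (x ++ f).
by exists (f :: M), L'; rewrite /= f_x -catA in M_x L_x L'_x *.
Qed.

Lemma insert_factor_single x L y : insert_factor x L = [:: y] ->
  L = [::] \/ exists L0 f, L = rcons L0 f /\ lexlt f (x ++ flatten L0).
Proof.
elim: L x => [|f L IH] x /=; first by left.
case: ifP => // f_x /IH [-> | [L0 [g [-> g_lt]]]]; right.
  by exists [::], f; rewrite cats0.
by exists (f :: L0), g; rewrite /= catA.
Qed.

Definition factorization_unique_upto n :=
  forall w gs, size w <= n -> nyldon_fact gs w -> gs = factorization w.

Definition suffix_lt_upto n :=
  forall g s, size g <= n -> Nyldon g -> nyldon_proper_suffix g s -> lexlt s g.

Section FactorizationInduction.

Variable n : nat.
Hypothesis unique_n : factorization_unique_upto n.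

Lemma fact_factorization w : size w <= n -> nyldon_fact (factorization w) w.
Proof. by move=> w_n; have [gs fact_gs] := nyldon_fact_exists w; rewrite -(unique_n w_n fact_gs). Qed.

Lemma factorization_Nyldon w : size w <= n -> Nyldon w -> factorization w = [:: w].
Proof. by move=> w_n /nyldon_fact1/(unique_n w_n). Qed.

Lemma Nyldon_factorization w :
  size w <= n -> w <> [::] -> factorization w = [:: w] -> Nyldon w.
Proof.
move=> w_n w0 w_fact; apply/NyldonE.
case: w w_n w0 w_fact => [|c [|d u]] // w_n _ w_fact; [by left | right].
by split=> // -[gs [gs2 /(unique_n w_n)]]; rewrite w_fact => gs_w; rewrite gs_w in gs2.
Qed.

Lemma factorization_Nyldon_succ w :
  size w <= n.+1 -> Nyldon w -> factorization w = [:: w].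
Proof.
case: w => [|c v] //= v_n cvN.
have [M [L' [v_ML ins_M -> L'_ge]]] := insert_factorP [:: c] (factorization v).
have fact_v := fact_factorization v_n.
case: L' v_ML L'_ge => [|f L] v_ML L_ge.
  by rewrite cats0 in v_ML; rewrite -v_ML flatten_factorization.
rewrite v_ML in fact_v; have [fact_M fact_fL] := nyldon_fact_catr fact_v.
have v_cat : v = flatten M ++ flatten (f :: L) by case: fact_v => _ [<- _]; rewrite flatten_cat.
have cM_n : size (c :: flatten M) <= n.
  have := Nyldon_pos (proj1 fact_fL f (mem_head _ _)).
  by move: v_n; rewrite v_cat /= !size_cat; lia.
have cMN : Nyldon (c :: flatten M).
  apply: Nyldon_factorization (cM_n) _ _ => //=.
  by rewrite -(unique_n (ltnW cM_n) fact_M).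
case: (Nyldon_unsplittable cvN); exists ([:: c :: flatten M] ++ f :: L); split=> //.
by rewrite v_cat -cat_cons; apply: nyldon_fact_cat (nyldon_fact1 cMN) fact_fL (L_ge _ _ _).
Qed.

Hypothesis suffix_n : suffix_lt_upto n.

Lemma Nyldon_suffix_le_upto g p s :
  size g <= n -> Nyldon g -> g = p ++ s -> Nyldon s -> lexle s g.
Proof.
move=> g_n gN; case: p => [-> _ | c p g_ps sN]; first exact: lexle_refl.
by apply/lexltW/(suffix_n g_n gN); split=> //; exists (c :: p).
Qed.

Lemma size_suffix_le_last gs v p s :
  size v <= n -> nyldon_fact gs v -> v = p ++ s -> Nyldon s ->
  size s <= size (last [::] gs).
Proof.
elim: gs v p => [|g [|f r] IH] v p v_n fact_v v_ps sN.
- by case: fact_v sN v_ps => _ [<- _]; case: p; case: s.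
- by case: fact_v v_ps => _ [<- _]; rewrite /= cats0 => ->; rewrite size_cat leq_addl.
have [[gsN [v_gR /andP[g_f _]]] [_ fact_R]] := (fact_v, nyldon_fact_catr (gs1 := [:: g]) fact_v).
have gN : Nyldon g := gsN g (mem_head _ _).
set R := flatten (f :: r) in fact_R; have gR_v : g ++ R = p ++ s by rewrite -v_ps -v_gR.
have [g_n R_n] : size g <= n /\ size R <= n by move: v_n; rewrite v_ps -gR_v size_cat; lia.
have [s_R | R_s] := leqP (size s) (size R).
  by have [m R_ms _] := cat_eq_overlap gR_v s_R; apply: IH R_n fact_R R_ms sN.
have [m s_mR g_pm] := cat_eq_overlap (esym gR_v) (ltnW R_s).
have m0 : m <> [::] by move=> m0; rewrite s_mR m0 ltnn in R_s.
case: (Nyldon_unsplittable sN); rewrite s_mR; apply: splittable_cat m0 fact_R _.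
move=> p' s' m_ps s'N; apply: lexle_trans g_f.
by apply: Nyldon_suffix_le_upto g_n gN _ s'N; rewrite g_pm m_ps catA.
Qed.

Lemma nyldon_fact_behead c v f r x :
  size (c :: v) <= n -> Nyldon (c :: v) -> nyldon_fact (f :: r) x -> lexle (c :: v) f ->
  nyldon_fact (factorization v ++ f :: r) (v ++ x).
Proof.
move=> cv_n cvN fact_x cv_f; have fact_v := fact_factorization (ltnW cv_n).
apply: nyldon_fact_cat (fact_v) fact_x _.
case/lastP: (factorization v) fact_v => [_ | E e /nyldon_fact_rcons[eN v_Ee]].
  exact: lexle_refl.
rewrite last_rcons; apply/lexltW/(lexlt_le_trans _ cv_f)/(suffix_n cv_n cvN).
by split=> //; exists (c :: flatten E); rewrite v_Ee.
Qed.

Lemma factorization_unique_succ : factorization_unique_upto n.+1.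
Proof.
move=> [|c u] gs w_n fact_gs; first exact: nyldon_fact0.
case: gs fact_gs => [[_ []] // | [|c' v] rest] fact_gs.
  by case: fact_gs => /(_ [::] (mem_head _ _)).
have [gsN [[c'c u_v] sorted_gs]] := fact_gs; subst c'.
have cvN := gsN _ (mem_head _ _).
have ins_v : factorization (c :: v) = [:: c :: v].
  by apply: factorization_Nyldon_succ cvN; move: w_n; rewrite -u_v /= size_cat; lia.
suff fact_u : nyldon_fact (factorization v ++ rest) u.
  by rewrite /= -(unique_n _ fact_u) // (insert_factor_cat _ ins_v) insert_factor_sorted.
have [_ fact_rest] := nyldon_fact_catr (gs1 := [:: c :: v]) fact_gs.
case: rest {gsN fact_gs} sorted_gs fact_rest u_v w_n => [|f r] sorted_gs fact_rest <- w_n.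
  by rewrite !cats0; apply: fact_factorization; move: w_n; rewrite /= cats0.
apply: nyldon_fact_behead cvN (fact_rest) _; last by case/andP: sorted_gs.
have := Nyldon_pos (proj1 fact_rest f (mem_head _ _)).
by move: w_n; rewrite /= !size_cat; lia.
Qed.

End FactorizationInduction.

Lemma suffix_lt_succ n :
  factorization_unique_upto n.+1 -> suffix_lt_upto n -> suffix_lt_upto n.+1.
Proof.
move=> unique_Sn suffix_n g t g_n gN [[[|c p] [p0 g_pt]] tN] //.
have unique_n : factorization_unique_upto n.
  by move=> w gs w_n; apply: unique_Sn; apply: leq_trans w_n _.
have u_n : size (p ++ t) <= n by move: g_n; rewrite g_pt.
have fact_u := fact_factorization unique_n u_n.
have ins_u : insert_factor [:: c] (factorization (p ++ t)) = [:: g].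
  by rewrite -(factorization_Nyldon unique_Sn g_n gN) g_pt.
have [u0 | [E [f [u_Ef f_lt]]]] := insert_factor_single ins_u.
  by move: (Nyldon_pos tN) (congr1 size (flatten_factorization (p ++ t))); rewrite u0 /= size_cat; lia.
have [fN pt_Ef] : Nyldon f /\ p ++ t = flatten E ++ f.
  by apply: nyldon_fact_rcons; rewrite -u_Ef.
have g_cEf : g = (c :: flatten E) ++ f by rewrite g_pt /= pt_Ef.
have t_f : size t <= size f.
  by have := size_suffix_le_last suffix_n u_n fact_u (erefl _) tN; rewrite u_Ef last_rcons.
have [m f_mt _] := cat_eq_overlap (esym pt_Ef) t_f.
have f_n : size f <= n by move: u_n; rewrite pt_Ef size_cat; lia.
apply: lexle_lt_trans (Nyldon_suffix_le_upto suffix_n f_n fN f_mt tN) _.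
by rewrite g_cEf; apply: lexlt_catr.
Qed.

Lemma factorization_unique_suffix_lt n :
  factorization_unique_upto n /\ suffix_lt_upto n.
Proof.
elim: n => [|n [unique_n suffix_n]].
  by split=> [w gs | g s]; rewrite leqn0 => /nilP-> //; apply: nyldon_fact0.
have unique_Sn := factorization_unique_succ unique_n suffix_n.
by split=> //; apply: suffix_lt_succ.
Qed.

Theorem nyldon_fact_unique gs w : nyldon_fact gs w -> gs = factorization w.
Proof. exact: (factorization_unique_suffix_lt (size w)).1 w gs (leqnn _). Qed.

Theorem Nyldon_suffix_lt g s : Nyldon g -> nyldon_proper_suffix g s -> lexlt s g.
Proof. exact: (factorization_unique_suffix_lt (size g)).2 g s (leqnn _). Qed.

Lemma Nyldon_suffix_le g p s : Nyldon g -> g = p ++ s -> Nyldon s -> lexle s g.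
Proof.
by move=> gN; apply: Nyldon_suffix_le_upto (leqnn _) gN => h t h_n; apply: Nyldon_suffix_lt.
Qed.

Lemma NyldonP w : Nyldon w <-> w <> [::] /\ factorization w = [:: w].
Proof.
have unique_w : factorization_unique_upto (size w) by move=> v gs _; apply: nyldon_fact_unique.
split=> [wN | [w0 w_fact]]; last exact: (Nyldon_factorization (n := size w)).
by split; [apply: Nyldon_neq0 | apply: (factorization_Nyldon (n := size w))].
Qed.

Lemma factorization_cat t v :
  Nyldon v -> (forall p s, t = p ++ s -> Nyldon s -> lexle s v) ->
  factorization (t ++ v) = rcons (factorization t) v.
Proof.
move=> vN; elim: t => [|c t IH] t_le; first by have [] := (NyldonP v).1 vN.
rewrite /= IH => [|p s t_ps]; last by apply: (t_le (c :: p)); rewrite t_ps.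
apply: insert_factor_rcons => y ct_y.
have y_ct : y = c :: t by rewrite -[c :: t]flatten_factorization /= ct_y /= cats0.
rewrite y_ct in ct_y *; apply: (t_le [::]) => //; exact/NyldonP.
Qed.

Definition nyldon_suffixes_le (p v : word) : Prop :=
  forall s, nyldon_proper_suffix p s -> lexle s v.

Lemma nyldon_suffixes_le_short p v : size p <= 1 -> nyldon_suffixes_le p v.
Proof.
move=> p1 s [[q [q0 p_qs]] /Nyldon_pos s0]; have q_pos : 0 < size q by case: q q0 {p_qs}.
by move: p1; rewrite p_qs size_cat; lia.
Qed.

Lemma nyldon_suffixes_le_trans p v w :
  nyldon_suffixes_le p v -> lexle v w -> nyldon_suffixes_le p w.
Proof. by move=> p_le v_w s /p_le /lexle_trans; apply. Qed.

Lemma Nyldon_cat p v :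
  Nyldon p -> Nyldon v -> lexlt v p -> nyldon_suffixes_le p v -> Nyldon (p ++ v).
Proof.
case: p => [/Nyldon_neq0 // | c u] pN vN v_p p_le; apply/NyldonP; split=> //.
have [_ p_fact] := (NyldonP _).1 pN.
rewrite /= factorization_cat // => [|q s u_qs sN]; last first.
  by apply: p_le; split=> //; exists (c :: q); rewrite u_qs.
by rewrite -cats1 (insert_factor_cat _ p_fact) /= v_p.
Qed.

Lemma Nyldon_suffix_cat p v s :
  Nyldon v -> nyldon_suffixes_le p v -> nyldon_proper_suffix (p ++ v) s ->
  exists m, v = m ++ s.
Proof.
move=> vN p_le [[q [q0 pv_qs]] sN].
have [s_v | v_s] := leqP (size s) (size v).
  by have [m v_ms _] := cat_eq_overlap pv_qs s_v; exists m.
have [m s_mv p_qm] := cat_eq_overlap (esym pv_qs) (ltnW v_s).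
have m0 : m <> [::] by move=> m0; rewrite s_mv m0 ltnn in v_s.
case: (Nyldon_unsplittable sN); rewrite s_mv.
apply: splittable_cat m0 (nyldon_fact1 vN) _ => p' s' m_ps s'N.
apply: p_le; split=> //; exists (q ++ p'); split; last by rewrite p_qm m_ps catA.
by case: (q) q0.
Qed.

Lemma nyldon_suffixes_le_cat p v :
  Nyldon v -> nyldon_suffixes_le p v -> nyldon_suffixes_le (p ++ v) v.
Proof.
move=> vN p_le s s_pv; have [m v_ms] := Nyldon_suffix_cat vN p_le s_pv.
by apply: Nyldon_suffix_le vN v_ms _; case: s_pv.
Qed.

Lemma longest_nyldon_proper_suffix_cat p v :
  p <> [::] -> Nyldon v -> nyldon_suffixes_le p v ->
  longest_nyldon_proper_suffix (p ++ v) v.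
Proof.
move=> p0 vN p_le; split=> [|s s_pv]; first by split=> //; exists p.
by have [m ->] := Nyldon_suffix_cat vN p_le s_pv; rewrite size_cat leq_addl.
Qed.

Definition Ha (k : nat) : word := H k ++ [:: a].

Lemma F_cons k : F k.+1 = a :: H k.+1.
Proof. by elim: k => // k; rewrite /H /= => ->. Qed.

Lemma H_rec k : H k.+3 = Ha k.+2 ++ H k.+1.
Proof. by rewrite /Ha -catA /H -[F k.+3]/(F k.+2 ++ F k.+1) !F_cons. Qed.

Lemma Ha_rec k : Ha k.+3 = Ha k.+2 ++ Ha k.+1.
Proof. by rewrite {1}/Ha H_rec -catA. Qed.

Lemma Ha_neq0 k : Ha k <> [::].
Proof. by rewrite /Ha; case: (H k). Qed.

Lemma Ha_le k : lexle (Ha k) (Ha k.+1).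
Proof. by case: k => [|[|k]] //; rewrite Ha_rec lexle_prefix. Qed.

Lemma Ha_lt k : lexlt (Ha k.+1) (Ha k.+2).
Proof. by case: k => [|k] //; rewrite Ha_rec lexlt_prefix //; apply/eqP/Ha_neq0. Qed.

Lemma H_lt_Ha k : lexlt (H k.+2) (Ha k.+3).
Proof. by rewrite Ha_rec /Ha -catA lexlt_prefix. Qed.

Lemma Ha_le_H k : lexle (Ha k.+1) (H k.+2).
Proof. by case: k => [|k] //; rewrite H_rec lexle_prefix. Qed.

Lemma Ha_Nyldon_suffixes k :
  (Nyldon (Ha k.+1) /\ nyldon_suffixes_le (Ha k.+1) (Ha k.-1)) /\
  (Nyldon (Ha k.+2) /\ nyldon_suffixes_le (Ha k.+2) (Ha k)).
Proof.
elim: k => [|k [[N1 _] [N2 le2]]].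
  have Ha2 : Ha 2 = [:: b] ++ [:: a] by [].
  split; first by split; [apply: Nyldon1 | apply: nyldon_suffixes_le_short].
  have b_le : nyldon_suffixes_le [:: b] [:: a] by apply: nyldon_suffixes_le_short.
  rewrite Ha2; split; last exact: nyldon_suffixes_le_cat (Nyldon1 a) b_le.
  by apply: Nyldon_cat b_le => //; apply: Nyldon1.
have le21 := nyldon_suffixes_le_trans le2 (Ha_le k).
rewrite /= Ha_rec; split=> //; split; first exact: Nyldon_cat N2 N1 (Ha_lt k) le21.
exact: nyldon_suffixes_le_cat N1 le21.
Qed.

Lemma Ha_Nyldon k : Nyldon (Ha k.+1).
Proof. by have [[]] := Ha_Nyldon_suffixes k. Qed.

Lemma Ha_suffixes_le k : nyldon_suffixes_le (Ha k.+3) (Ha k.+2).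
Proof.
have [_ [_ le31]] := Ha_Nyldon_suffixes k.+1.
exact: nyldon_suffixes_le_trans le31 (Ha_le _).
Qed.

Lemma Ha_suffixes_le_H k : nyldon_suffixes_le (Ha k.+3) (H k.+2).
Proof.
have [_ [_ le31]] := Ha_Nyldon_suffixes k.+1.
exact: nyldon_suffixes_le_trans le31 (Ha_le_H _).
Qed.

Lemma H_Nyldon k : Nyldon (H k.+2).
Proof.
suff : Nyldon (H k.+2) /\ Nyldon (H k.+3) by case.
elim: k => [|k [N2 N3]]; first by split; [apply: Nyldon1 | apply: (Ha_Nyldon 1)].
split=> //; rewrite H_rec.
by apply: Nyldon_cat N2 (H_lt_Ha k) _; [apply: Ha_Nyldon | apply: Ha_suffixes_le_H].
Qed.

Theorem lemma3 :
  (forall k : nat, 2 <= k -> Nyldon (H k) /\ Nyldon (H k ++ [:: a])) /\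
  (forall k : nat, 4 <= k ->
     longest_nyldon_proper_suffix (H k) (H (k - 2)) /\
     longest_nyldon_proper_suffix (H k ++ [:: a]) (H (k - 2) ++ [:: a])).
Proof.
split=> [[|[|k]] // _ | [|[|[|[|k]]]] // _].
  by split; [apply: H_Nyldon | apply: (Ha_Nyldon k.+1)].
rewrite subn2 /= -/(Ha k.+4) -/(Ha k.+2) (H_rec k.+1) (Ha_rec k.+1).
by split; apply: longest_nyldon_proper_suffix_cat;
  by [apply: Ha_neq0 | apply: H_Nyldon | apply: Ha_suffixes_le_H | apply: Ha_Nyldon | apply: Ha_suffixes_le].
Qed.
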